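(* Let $q=3^k$ for some $k\ge 1$, and pick $a,b,c,d\in\mathbb{F}_q$ with $ac\ne 0$. Then $f(X):=X^9+aX^5+bX^3+cX^2+dX$ does not permute $\mathbb{F}_q$. *)

From mathcomp Require Import all_boot all_order all_algebra all_field.
Set Implicit Arguments. Unset Strict Implicit. Unset Printing Implicit Defensive.
Import GRing.Theory.
Local Open Scope ring_scope.

Definition permutes (F : finFieldType) (f : F -> F) : Prop := bijective f.

From mathcomp Require Import all_boot all_order all_algebra all_field.
From mathcomp Require Import fingroup cyclic zify ring.
Set Implicit Arguments. Unset Strict Implicit. Unset Printing Implicit Defensive.
Import GRing.Theory FinRing.Theory.
Local Open Scope ring_scope.

(* By Hermite's criterion, if f permutes F_q then \sum_x f(x)^t = 0 for
   0 < t < q - 1, i.e. the coefficients of X^(q-1), X^(2(q-1)), ... of f^t add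
   up to 0.  In characteristic 3, f(x)^(3^j) is f with its coefficients raised to
   the power 3^j evaluated at x^(3^j), so once t is written in base 3 the few
   coefficients of f^t that matter can be computed digit by digit.
   For q = 3^k with k >= 3, the exponent t = 2 + 3 + 9 + ... + 3^(k-2) gives as
   coefficient of X^(q-1) either 2c or 2ab times a nonzero power of a, according
   to the parity of k; hence k is even and b = 0.  Then t = 1 + 3 + 2*9 + 27 + ...
   + 3^(k-2) gives 2 a^12 c^10 times a nonzero power of a.  For q = 3 the exponent
   t = 1 already gives c; for q = 9, t = 2 forces b = 0 and t = 5 forces
   (1 + d)^2 + a^2 = 0, after which f(x) = x (1 + d + a x^4 + c x) visibly has a
   second root. *)

Fixpoint div3 (n : nat) : option nat :=
  match n with
  | 0 => Some 0%N
  | 1 | 2 => None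
  | n.+3 => omap S (div3 n)
  end.

Lemma div3P n : if div3 n is Some s then n = (3 * s)%N else ~~ (3 %| n)%N.
Proof.
elim/ltn_ind: n => -[|[|[|n]]] // IH /=.
have := IH n (ltnW (ltnW (ltnSn n.+1))); case: (div3 n) => [s ->|] /=; first lia.
by rewrite -[n.+3]addn3 dvdn_addl.
Qed.

Section CoefBelow.
Variable R : nzRingType.
Implicit Types p : {poly R}.

(* The coefficient of X^(n - r) in p, and 0 (not p`_0) when r > n.  It is written
   with Stdlib's Nat operations, which cbn evaluates on numerals. *)
Definition coefd p (n r : nat) : R := if Nat.leb r n then p`_(Nat.sub n r) else 0.

Lemma coefdE p n r : coefd p n r = if (r <= n)%N then p`_(n - r) else 0.
Proof.
by rewrite /coefd; case: PeanoNat.Nat.leb_spec => [/leP -> | /leP]; last case: leqP.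
Qed.

Lemma coefd_size p n r : (size p <= n - r)%N -> coefd p n r = 0.
Proof. by rewrite coefdE; case: ifP => // _ /leq_sizeP->. Qed.

Lemma coefd1 n r : coefd 1 n r = if Nat.leb r n then (Nat.sub n r == 0)%:R else 0.
Proof. by rewrite /coefd coef1. Qed.

End CoefBelow.

Lemma coefd_comp_X3 (R : comNzRingType) (p : {poly R}) n r :
  coefd (p \Po 'X^3) (3 * n) r = oapp (coefd p n) 0 (div3 r).
Proof.
rewrite !coefdE coef_comp_poly_Xn //; have := div3P r.
case: (div3 r) => [s ->|ndvd] /=; rewrite ?coefdE.
  by rewrite leq_pmul2l //; case: leqP => // _; rewrite -mulnBr dvdn_mulr // mulKn.
case: leqP => // le_rn; suff /negbTE -> : ~~ (3 %| 3 * n - r)%N by [].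
by apply: contra ndvd => dvd; rewrite -(subKn le_rn) dvdn_sub ?dvdn_mulr.
Qed.

Section FinFieldPowerSums.
Variable F : finFieldType.

Lemma finField_card_eq0 : (#|F|%:R : F) = 0.
Proof. by have := @expg_cardG _ [set: F]%G 1%R (in_setT _); rewrite zmodXgE cardsT. Qed.

Lemma expf_card_pred (x : F) : x != 0 -> x ^+ #|F|.-1 = 1.
Proof.
move=> x0; apply: (mulfI x0); rewrite -exprS prednK ?expf_card ?mulr1 //.
by apply/card_gt0P; exists x.
Qed.

Lemma exists_expf_neq1 n : ~~ (#|F|.-1 %| n)%N -> exists2 g : F, g != 0 & g ^+ n != 1.
Proof.
move=> ndvd; have [u defU] := cyclicP (field_unit_group_cyclic [set: {unit F}]%G).
exists (val u); first by rewrite -unitfE (valP u).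
apply: contra ndvd => /eqP un1.
have: (u ^+ n)%g == 1%g by rewrite -val_eqE /= val_unitX un1.
by rewrite -order_dvdn orderE -defU -card_finField_unit.
Qed.

Lemma sum_expr_finField n :
  \sum_(x : F) x ^+ n = if ((0 < n) && (#|F|.-1 %| n))%N then -1 else 0.
Proof.
case: n => [|n] /=.
  by rewrite (eq_bigr (fun=> 1)) // sumr_const -[#|_|]/(#|F|) finField_card_eq0.
have [dvd | ndvd] := boolP (#|F|.-1 %| n.+1)%N.
  rewrite (bigD1 0) //= expr0n add0r (eq_bigr (fun=> 1)); last first.
    by move=> x x0; case/dvdnP: dvd => u ->; rewrite mulnC exprM expf_card_pred ?expr1n.
  rewrite sumr_const cardC1; apply: (addIr 1).
  by rewrite addNr natr1 prednK ?finField_card_eq0 // ltnW ?card_finNzRing_gt1.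
have [g g0 gn1] := exists_expf_neq1 ndvd.
have scaled : \sum_(x : F) x ^+ n.+1 = g ^+ n.+1 * \sum_(x : F) x ^+ n.+1.
  rewrite [LHS](reindex_inj (mulfI g0)) mulr_sumr.
  by apply: eq_bigr => x _; rewrite exprMn.
apply/eqP; move/eqP: scaled; rewrite -subr_eq0 -[X in X - _]mul1r -mulrBl mulf_eq0.
by rewrite subr_eq0 eq_sym (negbTE gn1).
Qed.

Lemma sum_horner_finField (P : {poly F}) B : (size P <= B.+1 * #|F|.-1)%N ->
  \sum_(x : F) P.[x] = - \sum_(N < B) P`_(#|F|.-1 * N.+1).
Proof.
set Q := #|F|.-1 => sizeP.
have Q_gt0 : (0 < Q)%N by rewrite /Q -subn1 subn_gt0 card_finNzRing_gt1.
under eq_bigr do rewrite (horner_coef_wide _ sizeP).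
rewrite exchange_big /=.
under eq_bigr do rewrite -mulr_sumr sum_expr_finField.
have block N : \sum_(N * Q <= i < N.+1 * Q)
    P`_i * (if ((0 < i) && (Q %| i))%N then -1 else 0) =
    if (0 < N)%N then - P`_(Q * N) else 0.
  rewrite big_ltn ?ltn_pmul2r // big_nat_cond big1 ?addr0 => [|i].
    rewrite muln_gt0 Q_gt0 andbT dvdn_mull // andbT mulnC.
    by case: N => [|N]; rewrite ?mulr0 ?mulrN1.
  case/andP=> /andP[lt_Ni lt_iN] _; case: ifP => [|_]; last by rewrite mulr0.
  by case/andP=> _ /dvdnP[u i_eq]; move: lt_Ni lt_iN; rewrite i_eq !ltn_pmul2r //; lia.
rewrite -/Q -(big_mkord xpredT (fun i => P`_i * (if ((0 < i) && (Q %| i))%N then -1 else 0))).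
rewrite big_nat_mul big_nat_recl // block /= add0r big_mkord -sumrN.
by apply: eq_bigr => N _; rewrite block.
Qed.

Lemma hermite_coef_sum (f : F -> F) (P : {poly F}) t B : injective f ->
    (forall x, P.[x] = f x ^+ t) -> (0 < t < #|F|.-1)%N ->
    (size P <= B.+1 * #|F|.-1)%N ->
  \sum_(N < B) coefd P (#|F| * N.+1) N.+1 = 0.
Proof.
move=> f_inj Pf /andP[t_gt0 t_lt] sizeP.
have : \sum_(x : F) P.[x] = 0.
  rewrite (eq_bigr _ (fun x _ => Pf x)).
  rewrite -(reindex_inj (P := xpredT) (F := fun y => y ^+ t) f_inj).
  by rewrite sum_expr_finField t_gt0 gtnNdvd.
rewrite (sum_horner_finField sizeP) => /eqP; rewrite oppr_eq0 => /eqP sum0.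
rewrite -[RHS]sum0; apply: eq_bigr => N _.
rewrite coefdE leq_pmull; last by apply/card_gt0P; exists 0.
by rewrite -subn1 mulnBl mul1n.
Qed.

End FinFieldPowerSums.

Fixpoint num3 (s : seq nat) : nat := if s is e :: s' then e + 3 * num3 s' else 0.

Lemma num3_nseq1 m : (3 ^ m = (2 * num3 (nseq m 1)).+1)%N.
Proof. by elim: m => //= m IH; rewrite expnS IH; lia. Qed.

Section FrobeniusTwists.
Variables (R : comNzRingType) (a b c d : R).

Definition ftwist (j : nat) : {poly R} :=
  'X^9 + a ^+ (3 ^ j) *: 'X^5 + b ^+ (3 ^ j) *: 'X^3 + c ^+ (3 ^ j) *: 'X^2
  + d ^+ (3 ^ j) *: 'X^1.

(* [fdigits 0 s] represents x |-> f(x) ^+ num3 s in characteristic 3, where s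
   lists the base-3 digits of the exponent (see horner_fdigits). *)
Fixpoint fdigits (j : nat) (s : seq nat) : {poly R} :=
  if s is e :: s' then ftwist j ^+ e * (fdigits j.+1 s' \Po 'X^3) else 1.

Lemma horner_ftwist0 x :
  (ftwist 0).[x] = x ^+ 9 + a * x ^+ 5 + b * x ^+ 3 + c * x ^+ 2 + d * x.
Proof. by rewrite !(hornerD, hornerZ, hornerXn) expn0 !expr1. Qed.

Lemma ftwist_frobenius j x : 3 \in [pchar R] ->
  (ftwist j).[x] ^+ 3 = (ftwist j.+1).[x ^+ 3].
Proof.
move=> pchar3; rewrite -(pFrobenius_autE pchar3) !(hornerD, hornerZ, hornerXn).
rewrite !rmorphD !(rmorphM _ (_ ^+ (3 ^ j))) !rmorphXn.
by rewrite !expnS !exprM.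
Qed.

Lemma horner_fdigits j s x : 3 \in [pchar R] ->
  (fdigits j s).[x] = (ftwist j).[x] ^+ num3 s.
Proof.
move=> pchar3; elim: s j x => [|e s IH] j x /=; first by rewrite hornerE.
by rewrite hornerM horner_comp hornerXn IH -ftwist_frobenius // -exprM exprD horner_exp.
Qed.

Lemma size_ftwist j : (size (ftwist j) <= 10)%N.
Proof.
apply/leq_sizeP => i le10i; rewrite !coefD !coefZ !coefXn.
by rewrite !(eqn_leq i) !(leqNgt i) !(leq_ltn_trans _ le10i) ?mulr0 ?addr0.
Qed.

Lemma size_fdigits j s : (size (fdigits j s) <= (9 * num3 s).+1)%N.
Proof.
elim: s j => [|e s IH] j /=; first by rewrite size_poly1.
have size_pow : (size (ftwist j ^+ e) <= (9 * e).+1)%N.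
  apply: leq_trans (size_poly_exp_leq _ _) _; rewrite ltnS leq_mul //.
  by have := size_ftwist j; lia.
have size_comp : (size (fdigits j.+1 s \Po 'X^3) <= (27 * num3 s).+1)%N.
  apply: leq_trans (size_comp_poly_leq _ _) _; rewrite size_polyXn ltnS.
  by have := IH j.+1; lia.
by apply: leq_trans (size_polyMleq _ _) _; lia.
Qed.

Lemma coefd_mul_ftwist j p n r :
  coefd (ftwist j * p) n r =
  coefd p n (r + 9)%coq_nat + a ^+ (3 ^ j) * coefd p n (r + 5)%coq_nat
  + b ^+ (3 ^ j) * coefd p n (r + 3)%coq_nat + c ^+ (3 ^ j) * coefd p n (r + 2)%coq_nat
  + d ^+ (3 ^ j) * coefd p n (r + 1)%coq_nat.
Proof.
rewrite !coefdE /ftwist !mulrDl !coefD -!scalerAl !coefZ !coefXnM.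
have [le_rn|lt_nr] := leqP r n; last first.
  by rewrite !(leqNgt _ n) !ltn_addr ?mulr0 ?addr0.
have shift e : (if (n - r < e)%N then 0 else p`_(n - r - e)) =
    if ((r + e)%coq_nat <= n)%N then p`_(n - (r + e)%coq_nat) else 0.
  by case: ltnP => lt; case: leqP => le //; [lia | rewrite subnDA | lia].
by rewrite !shift.
Qed.

Lemma fdigitsS j e s : fdigits j (e.+1 :: s) = ftwist j * fdigits j (e :: s).
Proof. by rewrite /= exprS mulrA. Qed.

Lemma fdigits0 j s : fdigits j (0 :: s) = fdigits j.+1 s \Po 'X^3.
Proof. by rewrite /= mul1r. Qed.

End FrobeniusTwists.

Arguments fdigits : simpl never.

Ltac coefd_expand :=
  repeat progress (rewrite ?fdigitsS ?fdigits0 ?coefd_mul_ftwist ?coefd_comp_X3;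
                   cbn [div3 oapp omap obind Nat.add]).

Section TopCoefficients.
Variables (R : comNzRingType) (a b c d : R).

Local Notation fones j m := (fdigits a b c d j (nseq m 1%N)).

Lemma coefd_fones_low m j :
  [/\ coefd (fones j m) (3 ^ m.+1) 1 = 0, coefd (fones j m) (3 ^ m.+1) 2 = 0
    & coefd (fones j m) (3 ^ m.+1) 5 = 0].
Proof.
elim: m j => [|m IH] j /=; first by rewrite !coefd1.
have [h1 h2 h5] := IH j.+1; rewrite (expnS 3 m.+1); coefd_expand.
by rewrite h1 h2 !(mulr0, addr0, add0r).
Qed.

Lemma coefd_fones3 m j :
  coefd (fones j m.+1) (3 ^ m.+2) 3 = coefd (fones j.+1 m) (3 ^ m.+1) 4.
Proof.
have [_ h2 _] := coefd_fones_low m j.+1.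
by rewrite /= (expnS 3 m.+1); coefd_expand; rewrite h2 !(mulr0, addr0).
Qed.

Lemma coefd_fones4 m j :
  coefd (fones j m.+1) (3 ^ m.+2) 4 = a ^+ (3 ^ j) * coefd (fones j.+1 m) (3 ^ m.+1) 3.
Proof.
have [_ h2 _] := coefd_fones_low m j.+1.
by rewrite /= (expnS 3 m.+1); coefd_expand; rewrite h2 !(mulr0, addr0, add0r).
Qed.

Lemma coefd_fones_high m j r : (r <= 5)%N -> coefd (fones j m) (3 ^ m.+1 * 2) r = 0.
Proof.
move=> le_r5; apply: coefd_size; apply: leq_trans (size_fdigits _ _ _ _ _ _) _.
by rewrite expnS num3_nseq1; lia.
Qed.

Lemma coefd_fdigits_2_ones m :
  coefd (fdigits a b c d 0 (2 :: nseq m 1)) (3 ^ m.+2) 1 =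
  2 * c * coefd (fones 1 m) (3 ^ m.+1) 4 + 2 * a * b * coefd (fones 1 m) (3 ^ m.+1) 3.
Proof.
have [h1 h2 h5] := coefd_fones_low m 1.
rewrite (expnS 3 m.+1); coefd_expand; rewrite h1 h2 h5 expn0 !expr1.
ring.
Qed.

Lemma coefd_fdigits_1_1_2_ones m : b = 0 -> coefd (fones 3 m) (3 ^ m.+1) 4 = 0 ->
  coefd (fdigits a b c d 0 (1 :: 1 :: 2 :: nseq m 1)) (3 ^ m.+4) 1 =
  2 * c * a ^+ 3 * a ^+ 9 * c ^+ 9 * coefd (fones 3 m) (3 ^ m.+1) 3.
Proof.
move=> b0 h4; have [h1 h2 h5] := coefd_fones_low m 3.
rewrite (expnS 3 m.+3) (expnS 3 m.+2) (expnS 3 m.+1); coefd_expand.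
rewrite h1 h2 h4 h5 b0 !expr0n /= expn0 expn1 !expr1.
ring.
Qed.

Lemma coefd_fdigits_1_1_2_ones_high m :
  coefd (fdigits a b c d 0 (1 :: 1 :: 2 :: nseq m 1)) (3 ^ m.+4 * 2) 2 = 0.
Proof.
rewrite (expnS 3 m.+3) (expnS 3 m.+2) (expnS 3 m.+1) -!mulnA; coefd_expand.
by rewrite !coefd_fones_high // !(mulr0, addr0).
Qed.

Lemma coefd_sum_card3 :
  \sum_(N < 4) coefd (fdigits a b c d 0 [:: 1%N]) (3 * N.+1) N.+1 = c.
Proof.
rewrite !big_ord_recr big_ord0 /=; coefd_expand.
by rewrite !coefd1 /= expn0 !expr1; ring.
Qed.

Lemma coefd_sum_card9_t2 :
  \sum_(N < 2) coefd (fdigits a b c d 0 [:: 2%N]) (9 * N.+1) N.+1 = 2 * a * b.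
Proof.
rewrite !big_ord_recr big_ord0 /= -[9%N]/(3 * 3)%N -!mulnA; coefd_expand.
by rewrite !coefd1 /= expn0 !expr1; ring.
Qed.

Lemma coefd_sum_card9_t5 : b = 0 ->
  \sum_(N < 5) coefd (fdigits a b c d 0 [:: 2%N; 1%N]) (9 * N.+1) N.+1 =
  c ^+ 3 * ((1 + d) ^+ 2 + a ^+ 2).
Proof.
move=> ->; rewrite !big_ord_recr big_ord0 /= -[9%N]/(3 * 3)%N -!mulnA; coefd_expand.
by rewrite !coefd1 /= !expr0n /= expn0 expn1 !expr1; ring.
Qed.

End TopCoefficients.

Lemma coefd_fones_parity (R : idomainType) (a b c d : R) m j : a != 0 ->
  (coefd (fdigits a b c d j (nseq m 1)) (3 ^ m.+1) 3 == 0) = odd m /\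
  (coefd (fdigits a b c d j (nseq m 1)) (3 ^ m.+1) 4 == 0) = ~~ odd m.
Proof.
move=> a_neq0; elim: m j => [|m IH] j; first by rewrite !coefd1 /= oner_eq0 eqxx.
have [IH3 IH4] := IH j.+1.
rewrite coefd_fones3 coefd_fones4 mulf_eq0 expf_eq0 (negbTE a_neq0) andbF.
by rewrite IH3 IH4 /= negbK.
Qed.

(* Try y = -(D + s a) / c with s = 1 or -1: it is a root as soon as y^4 = s.
   Both candidates are nonzero, so their fourth powers are 1 or -1, and in
   characteristic 3 their product is (a/c)^2, whose fourth power is 1. *)
Lemma card9_root (F : finFieldType) (D a c : F) :
    #|F| = 9%N -> 3 \in [pchar F] -> a != 0 -> c != 0 -> D ^+ 2 + a ^+ 2 = 0 ->
  exists2 y, y != 0 & D + a * y ^+ 4 + c * y = 0.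
Proof.
move=> card9 pchar3 a_neq0 c_neq0 Da; have three0 : 3%:R = 0 :> F := pcharf0 pchar3.
have fourth_root (y : F) : y != 0 -> y ^+ 4 = 1 \/ y ^+ 4 = -1.
  move=> y_neq0; have := expf_card_pred y_neq0; rewrite card9 => y8.
  have : (y ^+ 4 - 1) * (y ^+ 4 + 1) == 0 by rewrite -subr_sqr -exprM y8 expr1n subrr.
  by rewrite mulf_eq0 subr_eq0 addr_eq0 => /orP[] /eqP; [left | right].
pose y s := - (D + s * a) / c.
have y_root (s : F) : y s ^+ 4 = s -> D + a * y s ^+ 4 + c * y s = 0.
  by move=> ->; rewrite /y; field.
have y_neq0 (s : F) : s ^+ 2 = 1 -> y s != 0.
  move=> s2; rewrite /y mulf_neq0 ?invr_eq0 // oppr_eq0; apply/eqP => Dsa.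
  have : a ^+ 2 = - ((D + s * a) * (s * a - D) + (D ^+ 2 + a ^+ 2) - 3%:R * a ^+ 2
                     + (1 - s ^+ 2) * a ^+ 2) by ring.
  rewrite Dsa Da three0 s2 => /eqP; rewrite !(mul0r, subrr, addr0, oppr0).
  by rewrite expf_eq0 (negbTE a_neq0).
have y_prod : (y 1 * y (-1)) ^+ 4 = 1.
  have -> : y 1 * y (-1) = (a / c) ^+ 2 + (D ^+ 2 + a ^+ 2 - 3%:R * a ^+ 2) / c ^+ 2.
    by rewrite /y; field.
  rewrite Da three0 !(mul0r, subrr, addr0) -exprM (_ : 2 * 4 = #|F|.-1)%N.
    by rewrite expf_card_pred // mulf_neq0 ?invr_eq0.
  by rewrite card9.
have [y1|y1] := fourth_root _ (y_neq0 1 (expr1n _ 2)).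
  by exists (y 1); [exact: y_neq0 (expr1n _ 2) | exact: y_root].
exists (y (-1)); first by apply: y_neq0; rewrite sqrrN expr1n.
by apply: y_root; move: y_prod; rewrite exprMn y1 mulN1r => /eqP; rewrite eqr_oppLR => /eqP.
Qed.

Section NoPermutation.
Variables (F : finFieldType) (a b c d : F).
Hypotheses (a_neq0 : a != 0) (c_neq0 : c != 0) (pchar3 : 3 \in [pchar F]).
Hypothesis f_inj :
  injective (fun x : F => x ^+ 9 + a * x ^+ 5 + b * x ^+ 3 + c * x ^+ 2 + d * x).

Let two_neq0 : (2 : F) != 0.
Proof. by rewrite -(dvdn_pcharf pchar3 2). Qed.

Lemma hermite_fdigits s B :
    (0 < num3 s < #|F|.-1)%N -> ((9 * num3 s).+1 <= B.+1 * #|F|.-1)%N ->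
  \sum_(N < B) coefd (fdigits a b c d 0 s) (#|F| * N.+1) N.+1 = 0.
Proof.
move=> t_bounds size_bound; apply: hermite_coef_sum f_inj _ t_bounds _.
  by move=> x; rewrite horner_fdigits // horner_ftwist0.
exact: leq_trans (size_fdigits _ _ _ _ _ _) size_bound.
Qed.

Lemma card_neq3 : #|F| != 3%N.
Proof.
apply/eqP => card3; have := @hermite_fdigits [:: 1%N] 4.
by rewrite card3 coefd_sum_card3 => /(_ isT isT) /eqP; apply/negP.
Qed.

Lemma card_neq9 : #|F| != 9%N.
Proof.
apply/eqP => card9.
have b0 : b = 0.
  have := @hermite_fdigits [:: 2%N] 2.
  rewrite card9 coefd_sum_card9_t2 => /(_ isT isT) /eqP.
  by rewrite !mulf_eq0 (negbTE two_neq0) (negbTE a_neq0) => /eqP.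
have := @hermite_fdigits [:: 2%N; 1%N] 5.
rewrite card9 coefd_sum_card9_t5 // => /(_ isT isT) /eqP.
rewrite mulf_eq0 expf_eq0 (negbTE c_neq0) andbF /= => /eqP Da.
have [y y_neq0 y_root] := card9_root card9 pchar3 a_neq0 c_neq0 Da.
have y9 : y ^+ 9 = y by rewrite -card9 expf_card.
have /f_inj /eqP : y ^+ 9 + a * y ^+ 5 + b * y ^+ 3 + c * y ^+ 2 + d * y =
    0 ^+ 9 + a * 0 ^+ 5 + b * 0 ^+ 3 + c * 0 ^+ 2 + d * 0.
  rewrite b0 y9 !expr0n /= !(mulr0, mul0r, addr0) -[RHS](mulr0 y) -y_root.
  ring.
by rewrite (negbTE y_neq0).
Qed.

Lemma card_pow3_b0 m : #|F| = (3 ^ m.+3)%N -> odd m /\ b = 0.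
Proof.
move=> card_q.
set V3 := coefd (fdigits a b c d 1 (nseq m.+1 1)) (3 ^ m.+2) 3.
set V4 := coefd (fdigits a b c d 1 (nseq m.+1 1)) (3 ^ m.+2) 4.
have [V3E V4E] := coefd_fones_parity b c d m.+1 1 a_neq0.
rewrite /= negbK in V4E.
have sum0 : 2 * c * V4 + 2 * a * b * V3 = 0.
  have := @hermite_fdigits (2 :: nseq m.+1 1)%N 1.
  rewrite big_ord1 card_q muln1 coefd_fdigits_2_ones.
  by apply; rewrite !expnS num3_nseq1 /=; lia.
have [odd_m | even_m] := boolP (odd m).
  have V4_0 : V4 = 0 by apply/eqP; rewrite V4E.
  move: sum0; rewrite V4_0 mulr0 add0r => /eqP.
  by rewrite !mulf_eq0 (negbTE two_neq0) (negbTE a_neq0) V3E /= odd_m orbF => /eqP.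
have V3_0 : V3 = 0 by apply/eqP; rewrite V3E.
move: sum0; rewrite V3_0 mulr0 addr0 => /eqP.
by rewrite !mulf_eq0 (negbTE two_neq0) (negbTE c_neq0) V4E (negbTE even_m).
Qed.

Lemma card_pow3_b_neq0 m : #|F| = (3 ^ m.+4)%N -> ~~ odd m -> b != 0.
Proof.
move=> card_q even_m; apply/eqP => b0.
set V3 := coefd (fdigits a b c d 3 (nseq m 1)) (3 ^ m.+1) 3.
have [V3E V4E] := coefd_fones_parity b c d m 3 a_neq0.
have sum0 : 2 * c * a ^+ 3 * a ^+ 9 * c ^+ 9 * V3 = 0.
  have := @hermite_fdigits (1 :: 1 :: 2 :: nseq m 1)%N 2.
  rewrite !big_ord_recr big_ord0 /= add0r card_q muln1.
  rewrite coefd_fdigits_1_1_2_ones_high addr0.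
  rewrite coefd_fdigits_1_1_2_ones //; last by apply/eqP; rewrite V4E.
  by apply; rewrite !expnS num3_nseq1 /=; lia.
move/eqP: sum0; rewrite !mulf_eq0 (negbTE two_neq0) (negbTE a_neq0) (negbTE c_neq0).
by rewrite V3E (negbTE even_m).
Qed.

End NoPermutation.

Theorem proposition4p3 (F : finFieldType) (k : nat) (hk : (1 <= k)%N)
  (hq : #|F| = (3 ^ k)%N) (a b c d : F) (hac : a * c != 0) :
  ~ permutes (fun x : F => x ^+ 9 + a * x ^+ 5 + b * x ^+ 3 + c * x ^+ 2 + d * x).
Proof.
move=> /bij_inj f_inj; have pchar3 : 3 \in [pchar F] by apply: card_finPcharP hq _.
move: hac; rewrite mulf_eq0 negb_or => /andP[a_neq0 c_neq0].
case: k hk hq => [|[|[|m]]] // _ card_q.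
- by move: (card_neq3 c_neq0 pchar3 f_inj); rewrite card_q.
- by move: (card_neq9 a_neq0 c_neq0 pchar3 f_inj); rewrite card_q.
- have [odd_m b0] := card_pow3_b0 a_neq0 c_neq0 pchar3 f_inj card_q.
  case: m odd_m card_q => [//|m] /= even_m card_q.
  by move: (card_pow3_b_neq0 a_neq0 c_neq0 pchar3 f_inj card_q even_m); rewrite b0 eqxx.
Qed.
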